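(* Consider the inhomogeneous stochastic higher spin six vertex model in the quadrant $\mathbb{Z}_{\ge1}^2$ with the step boundary condition and parameters $u_1,u_2,\ldots\in(-\infty,0)$, $a_1,a_2,\ldots\in(0,+\infty)$, $\nu_1,\nu_2,\ldots\in(0,1)$, where the $a_i$'s and the $\nu_i$'s are uniformly bounded away from the endpoints of their respective intervals. Then for each $T=1,2,\ldots$, almost surely there are exactly $T$ up-right paths crossing the horizontal line at height $T+\frac12$ (equivalently, the total number of arrows on the vertical edges from $(x,T)$ to $(x,T+1)$, $x\ge1$, equals $T$); in other words, paths cannot stay horizontal forever.
   Context: Fix $q\in(0,1)$. For parameters $u,a,\nu$ define stochastic vertex weights $\mathsf{L}_{u,a,\nu}(i_1,j_1;i_2,j_2)$, $i_1,i_2\in\mathbb{Z}_{\ge0}$, $j_1,j_2\in\{0,1\}$ (here $i_1,j_1$ are the numbers of arrows entering a vertex from below and from the left, $i_2,j_2$ the numbers leaving upwards and to the right), which vanish unless $i_1+j_1=i_2+j_2$, and for $g\in\mathbb{Z}_{\ge0}$: $\mathsf{L}(g,0;g,0)=\frac{1-auq^g}{1-au}$, $\mathsf{L}(g,0;g-1,1)=\frac{-au(1-q^g)}{1-au}$, $\mathsf{L}(g,1;g,1)=\frac{\nu q^g-au}{1-au}$, $\mathsf{L}(g,1;g+1,0)=\frac{1-\nu q^g}{1-au}$. The stochastic higher spin six vertex model with the step boundary condition is the random collection of up-right paths in $\mathbb{Z}_{\ge1}^2$ (paths may share vertices and vertical edges, so vertical edges carry any number of arrows, but each horizontal edge carries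 at most one arrow) defined as follows: one arrow enters each vertex $(1,T)$, $T\ge1$, from the left, and no arrow enters any vertex $(N,1)$ from below. Inductively over $n=2,3,\ldots$, for each vertex $(N,T)$ with $N+T=n$, given the numbers $(i_1,j_1)$ of arrows entering it from below and from the left, the outgoing numbers $(i_2,j_2)$ are sampled independently with probabilities $\mathsf{L}_{u_T,a_N,\nu_N}(i_1,j_1;i_2,j_2)$. *)

From HB Require Import structures.
From mathcomp Require Import all_boot all_order all_algebra.
From mathcomp Require Import all_classical all_reals all_analysis.
Set Implicit Arguments.
Unset Strict Implicit.
Unset Printing Implicit Defensive.
Import Order.TTheory GRing.Theory Num.Theory.
Local Open Scope ring_scope.

(* Stochastic vertex weight L_{u,a,nu}(i1,j1;i2,j2):
   i1 = arrows entering from below, j1 = from the left,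
   i2 = arrows leaving upwards,    j2 = to the right. *)
Definition Lweight (R : realType) (q u a nu : R) (i1 j1 i2 j2 : nat) : R :=
  if (i1 + j1)%N != (i2 + j2)%N then 0 else
  match j1, j2 with
  | 0%N, 0%N => (1 - a * u * q ^+ i1) / (1 - a * u)
  | 0%N, 1%N => (- (a * u) * (1 - q ^+ i1)) / (1 - a * u)
  | 1%N, 1%N => (nu * q ^+ i1 - a * u) / (1 - a * u)
  | 1%N, 0%N => (1 - nu * q ^+ i1) / (1 - a * u)
  | _, _ => 0
  end.

(* Number of arrows entering vertex (x,t) from below, given the vertical
   outputs v (v x t = arrows on edge (x,t)->(x,t+1)); step boundary:
   no arrow enters (x,1) from below. *)
Definition in_below (v : nat -> nat -> nat) (x t : nat) : nat :=
  if t == 1%N then 0%N else v x t.-1.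

(* Number of arrows entering vertex (x,t) from the left, given the horizontal
   outputs h (h x t = arrows on edge (x,t)->(x+1,t)); step boundary:
   one arrow enters each (1,t) from the left. *)
Definition in_left (h : nat -> nat -> nat) (x t : nat) : nat :=
  if x == 1%N then 1%N else h x.-1 t.

(* Probability (product of the stochastic weights, sampled sequentially along
   the anti-diagonals) of the configuration (v,h) restricted to the box
   [1,N] x [1,T] of the quadrant: vertex (x,t) uses L_{u_t, a_x, nu_x}. *)
Definition box_weight (R : realType) (q : R) (u a nu : nat -> R)
    (N T : nat) (v h : nat -> nat -> nat) : R :=
  \prod_(1 <= x < N.+1) \prod_(1 <= t < T.+1)
     Lweight q (u t) (a x) (nu x) (in_below v x t) (in_left h x t) (v x t) (h x t).

(* Arrows are conserved at every vertex of positive weight, so the T paths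
   entering the box [1,M] x [1,T] from the left leave it through its top or
   through the right side of column M.  Once some column lets no arrow out to
   the right below height T + 1/2, no later column does (paths go up or right),
   and then exactly T arrows cross height T + 1/2 in every wider box.
   Whatever the configuration in the first K columns, column K + 1 sends all
   its arrows straight up with probability at least a constant c > 0: the
   weights L(g, j; g + j, 0) are bounded below by (1 - nu) / (1 - a u), which
   the bounds on a and nu make uniform in the column.  Hence every one of the
   first K columns lets an arrow out with probability at most (1 - c)^K. *)

From HB Require Import structures.
From mathcomp Require Import all_boot all_order all_algebra.
From mathcomp Require Import all_classical all_reals all_analysis.
From mathcomp Require Import zify lra.
Import Order.TTheory GRing.Theory Num.Theory.
Local Open Scope classical_set_scope.
Local Open Scope ring_scope.

Set Implicit Arguments.
Unset Strict Implicit.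

Lemma Lweight_balanced (R : realType) (q u a nu : R) i1 j1 i2 j2 :
  Lweight q u a nu i1 j1 i2 j2 != 0 -> (i1 + j1 = i2 + j2)%N.
Proof. by rewrite /Lweight; case: ifP => [_|/negbFE/eqP//]; rewrite eqxx. Qed.

Lemma Lweight_right_gt1 (R : realType) (q u a nu : R) i1 j1 i2 j2 :
  (1 < j2)%N -> Lweight q u a nu i1 j1 i2 j2 = 0.
Proof.
rewrite /Lweight; case: ifP => // _.
by case: j2 => [|[|j2]] //; case: j1 => [|[|j1]].
Qed.

Lemma Lweight_absorb_ge (R : realType) (q u a nu : R) g j :
  0 <= q <= 1 -> a * u <= 0 -> 0 <= nu <= 1 -> (j <= 1)%N ->
  (1 - nu) / (1 - a * u) <= Lweight q u a nu g j (g + j) 0.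
Proof.
move=> /andP[q0 q1] au0 /andP[nu0 nu1] j1.
have qg0 : 0 <= q ^+ g by rewrite exprn_ge0.
have qg1 : q ^+ g <= 1 by rewrite exprn_ile1.
have den : 0 < 1 - a * u by lra.
rewrite /Lweight addn0 eqxx /=.
by case: j j1 => [|[|//]] _; apply: ler_wpM2r; rewrite ?invr_ge0 ?(ltW den); nra.
Qed.

Definition balanced_col (v h : nat -> nat -> nat) (x T : nat) :=
  forall t, (1 <= t <= T)%N ->
    (in_below v x t + in_left h x t = v x t + h x t)%N.

Lemma col_flux v h x T : (1 <= T)%N -> balanced_col v h x T ->
  (\sum_(1 <= t < T.+1) in_left h x t = v x T + \sum_(1 <= t < T.+1) h x t)%N.
Proof.
case: T => [//|T] _; elim: T => [|T IH] bal.
  by rewrite !big_nat1; have := bal 1%N erefl; rewrite /in_below eqxx.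
rewrite big_nat_recr //= [X in _ = (_ + X)%N]big_nat_recr //= IH; last first.
  by move=> t ht; apply: bal; lia.
by have := bal T.+2 ltac:(lia); rewrite /in_below /=; lia.
Qed.

Lemma box_flux v h M T : (1 <= T)%N -> (1 <= M)%N ->
  (forall x, (1 <= x <= M)%N -> balanced_col v h x T) ->
  (\sum_(1 <= x < M.+1) v x T + \sum_(1 <= t < T.+1) h M t = T)%N.
Proof.
move=> T1; case: M => [//|M] _; elim: M => [|M IH] bal.
  rewrite big_nat1 -col_flux //; last exact: bal.
  by rewrite /in_left eqxx sum_nat_const_nat; lia.
rewrite big_nat_recr //= -addnA -col_flux //; last by apply: bal; lia.
by apply: IH => x hx; apply: bal; lia.
Qed.

Lemma zero_col_flux_succ v h x T : (1 <= T)%N -> (1 <= x)%N ->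
  balanced_col v h x.+1 T -> (\sum_(1 <= t < T.+1) h x t = 0)%N ->
  (\sum_(1 <= t < T.+1) h x.+1 t = 0)%N.
Proof.
move=> T1 x1 bal; have := col_flux T1 bal.
have -> : (\sum_(1 <= t < T.+1) in_left h x.+1 t = \sum_(1 <= t < T.+1) h x t)%N.
  by apply: eq_bigr => t _; rewrite /in_left; case: x x1 {bal}.
lia.
Qed.

Lemma crossings_eq v h T x0 M : (1 <= T)%N -> (1 <= x0 <= M)%N ->
  (forall x, (1 <= x <= M)%N -> balanced_col v h x T) ->
  (\sum_(1 <= t < T.+1) h x0 t = 0)%N ->
  (\sum_(1 <= x < M.+1) v x T = T)%N.
Proof.
move=> T1 /andP[x01 x0M] bal h0.
have zero k : (x0 + k <= M)%N -> (\sum_(1 <= t < T.+1) h (x0 + k) t = 0)%N.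
  elim: k => [|k IH] hk; first by rewrite addn0.
  rewrite addnS in hk *; apply: (zero_col_flux_succ (v := v) T1).
  - by rewrite addn_gt0 x01.
  - by apply: bal; rewrite hk.
  - exact/IH/ltnW.
have := zero (M - x0)%N; rewrite subnKC // => /(_ (leqnn M)) hM.
by have := box_flux T1 (leq_trans x01 x0M) bal; rewrite hM addn0.
Qed.

Section BoxWeight.
Variables (R : realType) (q : R) (u a nu : nat -> R).

Lemma box_weight_ext N T v h v' h' :
  (forall x t, (1 <= x <= N)%N -> (1 <= t <= T)%N ->
     v x t = v' x t /\ h x t = h' x t) ->
  box_weight q u a nu N T v h = box_weight q u a nu N T v' h'.
Proof.
move=> E; apply: eq_big_nat => x /andP[x1 xN]; apply: eq_big_nat => t /andP[t1 tT].
have [-> ->] := E x t ltac:(lia) ltac:(lia).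
rewrite /in_below /in_left.
have [_|t1'] := eqVneq t 1%N; have [_|x1'] := eqVneq x 1%N => //.
- by have [_ ->] := E x.-1 t ltac:(lia) ltac:(lia).
- by have [-> _] := E x t.-1 ltac:(lia) ltac:(lia).
- have [-> _] := E x t.-1 ltac:(lia) ltac:(lia).
  by have [_ ->] := E x.-1 t ltac:(lia) ltac:(lia).
Qed.

Lemma box_weight_eq0 N T v h x t : (1 <= x <= N)%N -> (1 <= t <= T)%N ->
  Lweight q (u t) (a x) (nu x) (in_below v x t) (in_left h x t) (v x t) (h x t) = 0 ->
  box_weight q u a nu N T v h = 0.
Proof.
move=> hx ht L0; rewrite /box_weight (bigD1_seq x) /= ?iota_uniq //; last first.
  by rewrite mem_index_iota; lia.
rewrite (bigD1_seq t) /= ?iota_uniq ?L0 ?mul0r //.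
by rewrite mem_index_iota; lia.
Qed.

Lemma box_weight_balanced N T v h x : box_weight q u a nu N T v h != 0 ->
  (1 <= x <= N)%N -> balanced_col v h x T.
Proof.
move=> bw hx t ht; apply: (@Lweight_balanced _ q (u t) (a x) (nu x)).
by apply: contra bw => /eqP L0; apply/eqP; apply: box_weight_eq0 L0.
Qed.

Lemma box_weight_right_le1 N T v h x t : box_weight q u a nu N T v h != 0 ->
  (1 <= x <= N)%N -> (1 <= t <= T)%N -> (h x t <= 1)%N.
Proof.
move=> bw hx ht; rewrite leqNgt; apply: contra bw => h2; apply/eqP.
exact: (box_weight_eq0 hx ht (Lweight_right_gt1 _ _ _ _ _ _ _ h2)).
Qed.

Hypothesis q01 : 0 <= q <= 1.
Hypothesis au_le0 : forall x t, (1 <= x)%N -> (1 <= t)%N -> a x * u t <= 0.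
Hypothesis nu01 : forall x, (1 <= x)%N -> 0 <= nu x <= 1.

(* Extend a configuration of the box [1,K] x [1,T] to column [K+1] by letting
   every arrow entering that column from the left go straight up. *)
Lemma box_weight_absorb_ge K T v h : 0 <= box_weight q u a nu K T v h ->
  exists v' h',
    [/\ forall x t, (x <= K)%N -> v' x t = v x t /\ h' x t = h x t,
        forall t, h' K.+1 t = 0%N &
        box_weight q u a nu K T v h *
          \prod_(1 <= t < T.+1) ((1 - nu K.+1) / (1 - a K.+1 * u t))
        <= box_weight q u a nu K.+1 T v' h'].
Proof.
move=> bw_ge0.
pose h' x t := if (x <= K)%N then h x t else 0%N.
pose vcol t := (\sum_(1 <= s < t.+1) in_left h' K.+1 s)%N.
pose v' x t := if (x <= K)%N then v x t else vcol t.
exists v', h'; split=> [x t xK|t|]; first by rewrite /v' /h' xK.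
  by rewrite /h' ltnn.
have -> : box_weight q u a nu K.+1 T v' h' = box_weight q u a nu K T v h *
    \prod_(1 <= t < T.+1) Lweight q (u t) (a K.+1) (nu K.+1)
      (in_below v' K.+1 t) (in_left h' K.+1 t) (v' K.+1 t) (h' K.+1 t).
  rewrite /box_weight big_nat_recr //=; congr (_ * _); apply: box_weight_ext.
  by move=> x t hx _; rewrite /v' /h' (_ : x <= K)%N //; lia.
have [->|bw0] := eqVneq (box_weight q u a nu K T v h) 0; first by rewrite !mul0r.
apply: ler_wpM2l => //; rewrite big_nat_cond [leRHS]big_nat_cond.
apply: ler_prod => t /andP[/andP[t1 tT] _].
have au0 := au_le0 (ltn0Sn K) t1.
have /andP[nu0 nu1] := nu01 (ltn0Sn K).
have jin1 : (in_left h' K.+1 t <= 1)%N.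
  rewrite /in_left /h' leqnn; case: eqP => [//|K0].
  by apply: (box_weight_right_le1 bw0); lia.
apply/andP; split; first by rewrite divr_ge0 ?subr_ge0 //; lra.
have -> : in_below v' K.+1 t = vcol t.-1.
  by rewrite /in_below /v' ltnn; case: eqP => [->|//]; rewrite /vcol big_geq.
have -> : v' K.+1 t = (vcol t.-1 + in_left h' K.+1 t)%N.
  by rewrite /v' ltnn /vcol -(prednK t1) /= big_nat_recr.
by rewrite /h' ltnn; apply: Lweight_absorb_ge; rewrite ?nu0.
Qed.

End BoxWeight.

Section BoxEvents.
Variables (d : measure_display) (Omega : measurableType d).
Variables (V H : nat -> nat -> Omega -> nat).
Hypothesis mV : forall x t k, measurable [set w | V x t w = k].
Hypothesis mH : forall x t k, measurable [set w | H x t w = k].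

Definition sample (F : nat -> nat -> Omega -> nat) (w : Omega) x t := F x t w.

Definition box_event N T (v h : nat -> nat -> nat) :=
  [set w | forall x t, (1 <= x <= N)%N -> (1 <= t <= T)%N ->
             V x t w = v x t /\ H x t w = h x t].

Definition box_det N T (E : set Omega) :=
  forall w w', box_event N T (sample V w) (sample H w) w' -> E w -> E w'.

(* Coding box configurations by natural numbers makes the atoms of the
   sigma-algebra generated by a box countable. *)
Definition box_code N T w : nat :=
  pickle [ffun p : 'I_N * 'I_T => (V p.1.+1 p.2.+1 w, H p.1.+1 p.2.+1 w)].

Definition box_atom N T n := [set w | box_code N T w = n].

Lemma box_atomE N T w :
  box_atom N T (box_code N T w) = box_event N T (sample V w) (sample H w).
Proof.
apply/seteqP; split => w' /=.
- move=> /(pcan_inj pickleK)/ffunP E x t hx ht.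
  have ltxN : (x.-1 < N)%N by lia.
  have lttT : (t.-1 < T)%N by lia.
  have := E (Ordinal ltxN, Ordinal lttT); rewrite !ffunE /= !prednK; by [case | lia].
- move=> E; congr pickle; apply/ffunP => -[i j]; rewrite !ffunE /=.
  have := ltn_ord i; have := ltn_ord j => ltjT ltiN.
  by have [-> ->] := E i.+1 j.+1 ltac:(lia) ltac:(lia).
Qed.

Lemma measurable_box_event N T v h : measurable (box_event N T v h).
Proof.
pose B x t := if (1 <= x <= N)%N && (1 <= t <= T)%N then
  [set w | V x t w = v x t] `&` [set w | H x t w = h x t] else setT.
have -> : box_event N T v h = \bigcap_x \bigcap_t B x t.
  apply/seteqP; split => w /=.
  - move=> E x _ t _; rewrite /B; case: ifP => // /andP[hx ht].
    by have [] := E x t hx ht.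
  - by move=> E x t hx ht; have := E x I t I; rewrite /B hx ht; case.
apply: bigcapT_measurable => x; apply: bigcapT_measurable => t.
by rewrite /B; case: ifP => _; [apply: measurableI|].
Qed.

Lemma measurable_box_atom N T n : measurable (box_atom N T n).
Proof.
have [[w <-]|none] := pselect (exists w, box_code N T w = n).
  by rewrite box_atomE; apply: measurable_box_event.
suff -> : box_atom N T n = set0 by [].
by apply/seteqP; split => w // hw; case: none; exists w.
Qed.

Lemma box_det_atom N T E w : box_det N T E -> E w ->
  E `&` box_atom N T (box_code N T w) = box_atom N T (box_code N T w).
Proof.
move=> detE Ew; apply/setIidr => w'; rewrite box_atomE => hw'; exact: detE hw' Ew.
Qed.

Lemma measurable_box_det N T E : box_det N T E -> measurable E.
Proof.
move=> detE.
have -> : E = \bigcup_(n in box_code N T @` E) box_atom N T n.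
  apply/seteqP; split => [w Ew|w [_ [w0 Ew0 <-]]]; first by exists (box_code N T w).
  by rewrite -(box_det_atom detE Ew0) => -[].
by apply: bigcup_measurable => n _; apply: measurable_box_atom.
Qed.

Variables (R : realType) (P : probability Omega R).

Lemma measure_box_atoms N T E : measurable E ->
  P E = (\sum_(n <oo) P (E `&` box_atom N T n))%E.
Proof.
move=> mE; rewrite -measure_semi_bigcup.
- congr (P _); apply/seteqP; split => [w Ew|w [n _ []//]].
  by exists (box_code N T w).
- by move=> n; apply: measurableI => //; apply: measurable_box_atom.
- by move=> i j _ _ [w [[_ <-] [_ <-]]].
- apply: bigcupT_measurable => n.
  by apply: measurableI => //; apply: measurable_box_atom.
Qed.

Lemma box_det_measure_le N T E F (k : R) :
  box_det N T E -> measurable F -> 0 <= k ->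
  (forall w, E w -> (k%:E * P (box_event N T (sample V w) (sample H w))
                     <= P (F `&` box_event N T (sample V w) (sample H w)))%E) ->
  (k%:E * P E <= P (F `&` E))%E.
Proof.
move=> detE mF k0 le_box; have mE := measurable_box_det detE.
rewrite (measure_box_atoms N T mE) (measure_box_atoms N T (measurableI _ _ mF mE)).
rewrite -nneseriesZl //; apply: lee_nneseries => [n _ _|n _].
  by rewrite mule_ge0 ?lee_fin.
rewrite -setIA; have [[w [Ew <-]]|none] := pselect (exists w, E w /\ box_code N T w = n).
  by rewrite (box_det_atom detE Ew) box_atomE; apply: le_box.
have -> : E `&` box_atom N T n = set0.
  by apply/seteqP; split => w // -[Ew hw]; case: none; exists w.
by rewrite setI0 measure0 mule0.
Qed.

End BoxEvents.

Lemma le0_geometric (R : realType) (x r : R) :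
  0 <= r < 1 -> (forall n, x <= r ^+ n) -> x <= 0.
Proof.
move=> /andP[r0 r1] le_x; rewrite leNgt; apply/negP => x0.
have r1' : `|r| < 1 by rewrite ger0_norm.
have [n /= rn_lt] := filter_ex (cvgr_lt 0 (cvg_expr r1') _ x0).
by have := le_x n; rewrite leNgt rn_lt.
Qed.

Lemma stop_factor_gt0 (R : realType) (ea en ut : R) :
  0 < ea -> 0 < en -> ut < 0 -> 0 < en * (ea / (ea - ut)).
Proof. by move=> ea0 en0 ut0; apply: mulr_gt0 => //; apply: divr_gt0 => //; lra. Qed.

Lemma stop_factor_le1 (R : realType) (ea en ut : R) :
  0 < ea -> 0 < en <= 1 -> ut < 0 -> en * (ea / (ea - ut)) <= 1.
Proof.
move=> ea0 /andP[en0 en1] ut0; rewrite -[1]mul1r ler_pM ?divr_ge0 //; try lra.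
by rewrite ler_pdivrMr ?mul1r; lra.
Qed.

Lemma stop_factor_le (R : realType) (ea en a nu ut : R) :
  0 < ea -> ea <= a <= ea^-1 -> 0 < en -> en <= nu <= 1 - en -> ut < 0 ->
  en * (ea / (ea - ut)) <= (1 - nu) / (1 - a * ut).
Proof.
move=> ea0 /andP[ea_a a_ea] en0 /andP[en_nu nu_en] ut0.
have eaa : ea * a <= 1.
  by rewrite -(mulfV (lt0r_neq0 ea0)); apply: ler_wpM2l; lra.
have aut : a * ut <= 0 by rewrite mulr_ge0_le0 ?ltW //; lra.
rewrite mulrA ler_pdivrMr; last by lra.
rewrite mulrAC ler_pdivlMr; last by lra.
have h1 : en * (ea - ut) <= (1 - nu) * (ea - ut) by rewrite ler_wpM2r; lra.
have h2 : 0 <= en * (- ut) * (1 - ea * a).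
  by rewrite !mulr_ge0 //; lra.
nra.
Qed.

Section Model.
Variables (R : realType) (q : R) (u a nu : nat -> R).
Variables (d : measure_display) (Omega : measurableType d).
Variables (P : probability Omega R) (V H : nat -> nat -> Omega -> nat).
Variables (eps_a eps_nu : R).
Hypothesis q01 : 0 < q < 1.
Hypothesis u_lt0 : forall t, (1 <= t)%N -> u t < 0.
Hypothesis eps_a_gt0 : 0 < eps_a.
Hypothesis a_bnd : forall x, (1 <= x)%N -> eps_a <= a x <= eps_a^-1.
Hypothesis eps_nu_gt0 : 0 < eps_nu.
Hypothesis nu_bnd : forall x, (1 <= x)%N -> eps_nu <= nu x <= 1 - eps_nu.
Hypothesis mV : forall x t k, measurable [set w | V x t w = k].
Hypothesis mH : forall x t k, measurable [set w | H x t w = k].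
Hypothesis box_law : forall N T v h,
  P (box_event V H N T v h) = (box_weight q u a nu N T v h)%:E.

Lemma q_itv : 0 <= q <= 1.
Proof. by case/andP: q01 => q0 q1; rewrite !ltW. Qed.

Lemma au_le0 x t : (1 <= x)%N -> (1 <= t)%N -> a x * u t <= 0.
Proof.
move=> x1 t1; rewrite mulr_ge0_le0 ?ltW ?u_lt0 //.
by have /andP[+ _] := a_bnd x1; apply: lt_le_trans.
Qed.

Lemma nu_itv x : (1 <= x)%N -> 0 <= nu x <= 1.
Proof.
move=> x1; have /andP[en_nu nu_en] := nu_bnd x1.
rewrite (le_trans (ltW eps_nu_gt0)) //= (le_trans nu_en) //.
by rewrite gerDl oppr_le0 ltW.
Qed.

Lemma box_weight_ge0 N T v h : 0 <= box_weight q u a nu N T v h.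
Proof. by rewrite -lee_fin -box_law measure_ge0. Qed.

Variable T : nat.
Hypothesis T_gt0 : (0 < T)%N.

Definition stop_lb := \prod_(1 <= t < T.+1) (eps_nu * (eps_a / (eps_a - u t))).

Lemma stop_lb_gt0 : 0 < stop_lb.
Proof.
rewrite /stop_lb big_nat_cond prodr_gt0 // => t /andP[/andP[t1 _] _].
exact: stop_factor_gt0 (u_lt0 t1).
Qed.

Lemma stop_lb_le1 : stop_lb <= 1.
Proof.
rewrite /stop_lb big_nat_cond prodr_ile1 // => t /andP[/andP[t1 _] _].
have /andP[en_nu nu_en] := nu_bnd (leqnn 1).
rewrite ltW ?(stop_factor_gt0 _ _ (u_lt0 t1)) ?stop_factor_le1 ?(u_lt0 t1) //.
by rewrite eps_nu_gt0 (le_trans en_nu) // (le_trans nu_en) // gerDl oppr_le0 ltW.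
Qed.

Lemma stop_lb_le_col x : (1 <= x)%N ->
  stop_lb <= \prod_(1 <= t < T.+1) ((1 - nu x) / (1 - a x * u t)).
Proof.
move=> x1; rewrite /stop_lb big_nat_cond [leRHS]big_nat_cond.
apply: ler_prod => t /andP[/andP[t1 _] _].
by rewrite ltW ?(stop_factor_gt0 _ _ (u_lt0 t1)) ?stop_factor_le ?a_bnd ?nu_bnd ?u_lt0.
Qed.

Definition zero_col x := [set w | forall t, (1 <= t <= T)%N -> H x t w = 0%N].

Definition crossed_upto K :=
  [set w | forall x, (1 <= x <= K)%N -> ~ zero_col x w].

Lemma box_det_zero_col N x : (x < N)%N -> box_det V H N T (zero_col x.+1).
Proof.
move=> xN w w' E zw t ht.
by have [_ ->] := E x.+1 t ltac:(lia) ht; apply: zw.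
Qed.

Lemma measurable_zero_col x : measurable (zero_col x.+1).
Proof. by apply: (measurable_box_det mV mH); apply: (box_det_zero_col (ltnSn x)). Qed.

Lemma box_det_crossed_upto K : box_det V H K T (crossed_upto K).
Proof.
move=> w w' E cw x hx zw'; apply: (cw x hx) => t ht.
by move: (E x t hx ht); rewrite /sample => -[_ <-]; apply: zw'.
Qed.

Lemma crossed_upto_succ K :
  crossed_upto K.+1 = crossed_upto K `\` zero_col K.+1.
Proof.
apply/seteqP; split => [w cw|w [cw zw] x hx].
  by split=> [x hx|]; apply: cw; lia.
have [xK|-> //] : (x <= K)%N \/ x = K.+1 by lia.
by apply: cw; lia.
Qed.

Lemma measure_zero_col_ge K E : box_det V H K T E ->
  (stop_lb%:E * P E <= P (zero_col K.+1 `&` E))%E.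
Proof.
move=> detE; apply: (box_det_measure_le mV mH detE _ (ltW stop_lb_gt0)).
  exact: measurable_zero_col.
move=> w _; set v := sample V w; set h := sample H w.
have [v' [h' [agree zero_h' le_bw]]] :=
  box_weight_absorb_ge q_itv au_le0 nu_itv (box_weight_ge0 K T v h).
have sub : box_event V H K.+1 T v' h' `<=` zero_col K.+1 `&` box_event V H K T v h.
  move=> w' Ew'; split=> [t ht|x t hx ht].
    by have [_ ->] := Ew' K.+1 t ltac:(lia) ht.
  have [<- <-] := agree x t ltac:(lia).
  by apply: Ew'; lia.
have le_sub : (P (box_event V H K.+1 T v' h')
                <= P (zero_col K.+1 `&` box_event V H K T v h))%E.
  apply: le_measure sub; rewrite inE; first exact: measurable_box_event.
  by apply: measurableI; [exact: measurable_zero_col | exact: measurable_box_event].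
apply: le_trans le_sub; rewrite !box_law -EFinM lee_fin (le_trans _ le_bw) // mulrC.
by apply: ler_wpM2l; [apply: box_weight_ge0 | apply: stop_lb_le_col].
Qed.

Lemma measurable_crossed_upto K : measurable (crossed_upto K).
Proof. by apply: (measurable_box_det mV mH); apply: box_det_crossed_upto. Qed.

Lemma measure_crossed_upto K :
  (P (crossed_upto K) <= ((1 - stop_lb) ^+ K)%:E)%E.
Proof.
elim: K => [|K IH].
  by rewrite expr0 probability_le1 //; apply: measurable_crossed_upto.
have mA := measurable_crossed_upto K; have mZ := measurable_zero_col K.
have finP B : measurable B -> P B = (fine (P B))%:E.
  by move=> mB; rewrite fineK // fin_num_measure.
have split_A : P (crossed_upto K) =
    (P (crossed_upto K.+1) + P (zero_col K.+1 `&` crossed_upto K))%E.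
  by rewrite crossed_upto_succ setIC; apply: measureDI.
move: IH (measure_zero_col_ge (box_det_crossed_upto (K := K))) split_A.
rewrite (finP _ mA) (finP _ (measurableI _ _ mZ mA)).
rewrite (finP _ (measurable_crossed_upto K.+1)) -EFinM -EFinD !lee_fin exprS.
move=> IH le_Z [split_A]; have := stop_lb_le1; nra.
Qed.

Lemma measure_crossed_forever : P (\bigcap_K crossed_upto K) = 0%E.
Proof.
have mA : measurable (\bigcap_K crossed_upto K).
  by apply: bigcapT_measurable => K; apply: measurable_crossed_upto.
rewrite -(fineK (fin_num_measure P _ mA)); congr (_%:E); apply/eqP.
rewrite eq_le fine_ge0 ?measure_ge0 // andbT.
apply: (@le0_geometric _ _ (1 - stop_lb)).
  by have := stop_lb_gt0; have := stop_lb_le1; rewrite !ltrBlDr; lra.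
move=> K; rewrite -lee_fin fineK ?fin_num_measure //.
apply: le_trans (measure_crossed_upto K); apply: le_measure => //; rewrite ?inE //.
  exact: measurable_crossed_upto.
by move=> w /(_ K I).
Qed.

Definition null_box M :=
  [set w | box_weight q u a nu M T (sample V w) (sample H w) = 0].

Lemma box_det_null_box M : box_det V H M T (null_box M).
Proof.
move=> w w' E; rewrite /null_box /= => <-; apply: box_weight_ext => x t hx ht.
by rewrite /sample; have [-> ->] := E x t hx ht.
Qed.

Lemma measurable_null_box M : measurable (null_box M).
Proof. by apply: (measurable_box_det mV mH); apply: box_det_null_box. Qed.

Lemma measure_null_box M : P (null_box M) = 0%E.
Proof.
apply/eqP; rewrite eq_le measure_ge0 andbT -(mul1e (P _)).
rewrite -[leRHS](measure0 P) -(set0I (null_box M)).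
apply: (box_det_measure_le mV mH (box_det_null_box (M := M)) measurable0 ler01) => w Nw.
by rewrite mul1e box_law Nw measure_ge0.
Qed.

Lemma crossings_eventually w :
  ~ (\bigcap_K crossed_upto K) w -> ~ (\bigcup_M null_box M) w ->
  exists N, forall M, (N <= M)%N -> (\sum_(1 <= x < M.+1) V x T w)%N = T.
Proof.
move=> not_crossed not_null.
have [K not_K] : exists K, ~ crossed_upto K w.
  by apply/existsNP => crossed; apply: not_crossed => K _; apply: crossed.
have [x hx zx] : exists2 x, (1 <= x <= K)%N & zero_col x w.
  by apply: contrapT => none; apply: not_K => x hx zx; apply: none; exists x.
exists x => M xM; apply: (@crossings_eq (sample V w) (sample H w) T x M T_gt0).
- by rewrite xM andbT; case/andP: hx.
- move=> y hy; apply: (@box_weight_balanced _ q u a nu _ _ _ _ _ _ hy).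
  by apply/eqP => bw0; apply: not_null; exists M.
- by rewrite big_nat_cond big1 // => t /andP[ht _]; apply: zx.
Qed.

Lemma ae_crossings_eq : {ae P, forall w, exists N, forall M, (N <= M)%N ->
  (\sum_(1 <= x < M.+1) V x T w)%N = T}.
Proof.
apply: (@negligibleS _ _ _ _ ((\bigcap_K crossed_upto K) `|` \bigcup_M null_box M)).
  move=> w /= not_ev; apply: contrapT => /not_orP[nc nn].
  exact: not_ev (crossings_eventually nc nn).
apply: negligibleU.
  exists (\bigcap_K crossed_upto K); split => //; last exact: measure_crossed_forever.
  by apply: bigcapT_measurable => K; apply: measurable_crossed_upto.
apply: negligible_bigcup => M; exists (null_box M); split => //.
  exact: measurable_null_box.
exact: measure_null_box.
Qed.

End Model.

Unset Implicit Arguments.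

Theorem lemma3p1 (R : realType) (q : R) (u a nu : nat -> R)
  (d : measure_display) (Omega : measurableType d) (P : probability Omega R)
  (V H : nat -> nat -> Omega -> nat) :
  0 < q < 1 ->
  (forall t, (1 <= t)%N -> u t < 0) ->
  (exists2 eps : R, 0 < eps &
     forall x, (1 <= x)%N -> eps <= a x <= eps^-1) ->
  (exists2 eps : R, 0 < eps &
     forall x, (1 <= x)%N -> eps <= nu x <= 1 - eps) ->
  (forall x t k, measurable [set w | V x t w = k]) ->
  (forall x t k, measurable [set w | H x t w = k]) ->
  (forall (N T : nat) (v h : nat -> nat -> nat),
     P [set w | forall x t, (1 <= x <= N)%N -> (1 <= t <= T)%N ->
                  V x t w = v x t /\ H x t w = h x t]
     = (box_weight q u a nu N T v h)%:E) ->
  forall T : nat, (1 <= T)%N ->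
    {ae P, forall w, exists N : nat, forall M : nat, (N <= M)%N ->
        (\sum_(1 <= x < M.+1) V x T w)%N = T}.
Proof.
move=> q01 u_lt0 [eps_a eps_a_gt0 a_bnd] [eps_nu eps_nu_gt0 nu_bnd] mV mH box_law.
exact: ae_crossings_eq q01 u_lt0 eps_a_gt0 a_bnd eps_nu_gt0 nu_bnd mV mH box_law.
Qed.
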